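(* Consider the TVFJ dynamics described in the context, and suppose the system is asymptotically stable. Let $\mathbf x_0\in[0,1]^n$ and let $\omega(\mathbf x_0)$ be the $\omega$-limit set of the trajectory with $\mathbf x[0]=\mathbf x_0$. Then for every $\mathbf x^*\in\omega(\mathbf x_0)$ and every $i$, \[ \min_j s_j\le x_i^*\le\max_j s_j . \]
   Context: There are $n$ agents with opinions $\mathbf x[t]$ and innate opinions $\mathbf s\in[0,1]^n$, evolving by $\mathbf x[t+1]=\Lambda[t]W[t]\mathbf x[t]+(I-\Lambda[t])\mathbf s$, with $W[t]$ row-stochastic and $\Lambda[t]=\mathrm{diag}(\lambda_1[t],\dots,\lambda_n[t])$, $\lambda_i[t]\in[0,1]$. Standing assumptions: $\lambda_i[t]=0$ iff $w_{ij}[t]=0$ for all $j$; there is no $\tau$ with $\Lambda[\tau]=0$. The state transition matrix is $\Phi(t,\tau)=\Lambda[t-1]W[t-1]\cdots\Lambda[\tau]W[\tau]$ for $t>\tau$, $\Phi(\tau,\tau)=I$. The system is asymptotically stable if $\lim_{t\to\infty}\|\Phi(t,\tau)\|=0$ for all $\tau\ge0$, where $\|A\|:=\max_i\sum_j|a_{ij}|$. The $\omega$-limit set is $\omega(\mathbf x_0)=\{\mathbf y:\exists\,t_k\to\infty,\ \mathbf x[t_k]\to\mathbf y\}$. *)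

From HB Require Import structures.
From mathcomp Require Import all_boot all_order all_algebra.
From mathcomp Require Import all_classical all_reals all_analysis.
Set Implicit Arguments. Unset Strict Implicit. Unset Printing Implicit Defensive.
Import Order.TTheory GRing.Theory Num.Theory.
Import numFieldNormedType.Exports.
Local Open Scope classical_set_scope.
Local Open Scope ring_scope.

Definition row_stochastic (R : realType) (n : nat) (A : 'M[R]_n) : Prop :=
  (forall i j, 0 <= A i j) /\ (forall i, \sum_j A i j = 1).

Definition infnorm (R : realType) (n : nat) (A : 'M[R]_n) : R :=
  \big[Num.max/0]_i \sum_j `|A i j|.

Definition Lam (R : realType) (n : nat) (lam : nat -> 'rV[R]_n) (t : nat)
  : 'M[R]_n := diag_mx (lam t).

Fixpoint PhiK (R : realType) (n : nat) (lam : nat -> 'rV[R]_n)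
  (W : nat -> 'M[R]_n) (tau k : nat) : 'M[R]_n :=
  match k with
  | 0 => 1%:M
  | k'.+1 => Lam lam (tau + k') *m W (tau + k') *m PhiK lam W tau k'
  end.

(* State transition matrix Phi(t, tau) for t >= tau (identity otherwise;
   only t >= tau is ever used). *)
Definition Phi (R : realType) (n : nat) (lam : nat -> 'rV[R]_n)
  (W : nat -> 'M[R]_n) (t tau : nat) : 'M[R]_n :=
  if (tau <= t)%N then PhiK lam W tau (t - tau) else 1%:M.

Definition asymp_stable (R : realType) (n : nat) (lam : nat -> 'rV[R]_n)
  (W : nat -> 'M[R]_n) : Prop :=
  forall tau : nat, (fun t : nat => infnorm (Phi lam W t tau)) @ \oo --> (0 : R).

Fixpoint traj (R : realType) (n : nat) (lam : nat -> 'rV[R]_n)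
  (W : nat -> 'M[R]_n) (s x0 : 'cV[R]_n) (t : nat) : 'cV[R]_n :=
  match t with
  | 0 => x0
  | t'.+1 => Lam lam t' *m W t' *m traj lam W s x0 t'
             + (1%:M - Lam lam t') *m s
  end.

(* omega-limit set: y such that x[t_k] -> y along some t_k -> oo
   (convergence entrywise, equivalent to any norm in finite dimension). *)
Definition omega_limit (R : realType) (n : nat) (x : nat -> 'cV[R]_n)
  (y : 'cV[R]_n) : Prop :=
  exists tk : nat -> nat,
    (forall N : nat, exists k0 : nat, forall k, (k0 <= k)%N -> (N <= tk k)%N) /\
    (forall i : 'I_n, (fun k : nat => x (tk k) i 0) @ \oo --> y i 0).

(* Fix M >= max_j s_j.  Since W is row-stochastic, e[t] = x[t] - M 1 satisfies
   e[t+1] = Lam W e[t] + (I - Lam)(s - M 1) <= Lam W e[t] entrywise, and Lam W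
   has nonnegative entries, so e[t] <= Phi(t, 0) e[0].  The entries of the right
   side are at most ||Phi(t, 0)|| ||e[0]||_1 -> 0, hence every limit point
   satisfies x* <= M.  The lower bound is the same argument for (-s, -x0). *)
From HB Require Import structures.
From mathcomp Require Import all_boot all_order all_algebra.
From mathcomp Require Import all_classical all_reals all_analysis.
Import Order.TTheory GRing.Theory Num.Theory.
Import numFieldNormedType.Exports.
Local Open Scope classical_set_scope.
Local Open Scope ring_scope.

Lemma row_stochastic_mul_const {R : realType} {n : nat} (A : 'M[R]_n) (M : R) :
  row_stochastic A -> A *m (const_mx M : 'cV_n) = const_mx M.
Proof.
move=> [_ A_sum1]; apply/matrixP => i j; rewrite !mxE.
under eq_bigr do rewrite mxE.
by rewrite -mulr_suml A_sum1 mul1r.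
Qed.

Lemma mulmx_ge0_le {R : numDomainType} {m n : nat} (A : 'M[R]_(m, n))
    (u v : 'cV[R]_n) :
  (forall i j, 0 <= A i j) -> (forall j, u j 0 <= v j 0) ->
  forall i, (A *m u) i 0 <= (A *m v) i 0.
Proof.
move=> A_ge0 u_le_v i; rewrite !mxE.
by apply: ler_sum => j _; apply: ler_wpM2l.
Qed.

Lemma mulmx_le_infnorm {R : realType} {n : nat} (A : 'M[R]_n) (u : 'cV[R]_n) i :
  (A *m u) i 0 <= infnorm A * \sum_j `|u j 0|.
Proof.
have row_le : \sum_j `|A i j| <= infnorm A.
  by rewrite /infnorm [X in _ <= X](bigD1 i) //= le_max lexx.
rewrite mxE; apply: le_trans (_ : \sum_j `|A i j| * \sum_k `|u k 0| <= _).
  apply: ler_sum => j _; apply: le_trans (ler_norm _) _.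
  rewrite normrM; apply: ler_wpM2l => //.
  by rewrite (bigD1 j) //= lerDl sumr_ge0.
by rewrite -mulr_suml ler_wpM2r // sumr_ge0.
Qed.

Lemma cvg_subseq_le_bound {R : realFieldType} (u b : nat -> R) (tk : nat -> nat)
    (M y : R) :
  tk @ \oo --> \oo -> b @ \oo --> 0 -> (forall t, u t <= M + b t) ->
  (fun k => u (tk k)) @ \oo --> y -> y <= M.
Proof.
move=> tk_oo b0 u_le u_tk_y.
have b_tk0 : (fun k => b (tk k)) @ \oo --> 0 := cvg_comp _ _ tk_oo b0.
rewrite -[M]addr0; apply: (ler_cvg_to u_tk_y (cvgD (cvg_cst M) b_tk0)).
by near=> k; apply: u_le.
Unshelve. all: end_near.
Qed.

Section TrajectoryBounds.
Context {R : realType} {n : nat} {W : nat -> 'M[R]_n} {lam : nat -> 'rV[R]_n}.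
Hypothesis W_stoch : forall t, row_stochastic (W t).
Hypothesis lam01 : forall t i, 0 <= lam t 0 i <= 1.

Lemma LamW_ge0 t i j : 0 <= (Lam lam t *m W t) i j.
Proof.
rewrite /Lam mul_diag_mx mxE.
by case/andP: (lam01 t i) => lam_ge0 _; rewrite mulr_ge0 // (W_stoch t).1.
Qed.

Lemma traj_subr_const (s x0 : 'cV[R]_n) (M : R) t :
  traj lam W s x0 t.+1 - const_mx M =
  Lam lam t *m W t *m (traj lam W s x0 t - const_mx M)
  + (1%:M - Lam lam t) *m (s - const_mx M).
Proof.
have WM : W t *m (const_mx M : 'cV_n) = const_mx M.
  exact: row_stochastic_mul_const.
rewrite /= !mulmxBr -(mulmxA _ (W t) (const_mx M)) WM !mulmxBl !mul1mx.
by rewrite opprB addrACA addKr.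
Qed.

Lemma traj_subr_const_le_PhiK (s x0 : 'cV[R]_n) (M : R) :
  (forall j, s j 0 <= M) ->
  forall t i, (traj lam W s x0 t - const_mx M) i 0
              <= (PhiK lam W 0 t *m (x0 - const_mx M)) i 0.
Proof.
move=> s_le; elim=> [|t IH] i; first by rewrite mul1mx.
rewrite traj_subr_const mxE /= add0r -(mulmxA (Lam lam t *m W t)).
rewrite -[X in _ <= X]addr0 lerD //.
  by apply: mulmx_ge0_le => // k j; apply: LamW_ge0.
rewrite mulmxBl mul1mx /Lam mul_diag_mx !mxE -{1}[s i 0 - M]mul1r -mulrBl.
have [_ lam_le1] := andP (lam01 t i).
by rewrite mulr_ge0_le0 ?subr_ge0 ?subr_le0.
Qed.

Lemma omega_limit_le {s x0 xs : 'cV[R]_n} {M : R} :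
  (forall j, s j 0 <= M) -> asymp_stable lam W ->
  omega_limit (traj lam W s x0) xs -> forall i, xs i 0 <= M.
Proof.
move=> s_le stable [tk [tk_ge tk_cvg]] i.
have tk_oo : tk @ \oo --> \oo.
  by apply/cvgnyPge => N; have [k0 k0_ge] := tk_ge N; exists k0.
pose C := \sum_j `|(x0 - const_mx M) j 0|.
apply: (@cvg_subseq_le_bound _ (fun t => traj lam W s x0 t i 0)
  (fun t => infnorm (Phi lam W t 0) * C) tk M _ tk_oo _ _ (tk_cvg i)).
  by rewrite -(mul0r C); apply: cvgM (stable 0%N) (cvg_cst C).
move=> t; rewrite -lerBlDl /Phi leq0n subn0.
have := traj_subr_const_le_PhiK s x0 M s_le t i.
rewrite !mxE => /le_trans; apply.
by have := mulmx_le_infnorm (PhiK lam W 0 t) (x0 - const_mx M) i; rewrite mxE.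
Qed.

Lemma traj_opp (s x0 : 'cV[R]_n) t :
  traj lam W (- s) (- x0) t = - traj lam W s x0 t.
Proof. by elim: t => [|t IH] //=; rewrite IH !mulmxN opprD. Qed.

Lemma omega_limit_opp {s x0 xs : 'cV[R]_n} :
  omega_limit (traj lam W s x0) xs ->
  omega_limit (traj lam W (- s) (- x0)) (- xs).
Proof.
move=> [tk [tk_ge tk_cvg]]; exists tk; split => // i.
under eq_fun do rewrite traj_opp mxE.
by rewrite mxE; apply: cvgN.
Qed.

Lemma omega_limit_ge {s x0 xs : 'cV[R]_n} {m : R} :
  (forall j, m <= s j 0) -> asymp_stable lam W ->
  omega_limit (traj lam W s x0) xs -> forall i, m <= xs i 0.
Proof.
move=> m_le stable /omega_limit_opp xs_lim i.
suff : (- xs) i 0 <= - m by rewrite mxE lerN2.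
by apply: (omega_limit_le (s := - s) (x0 := - x0)) => // j; rewrite mxE lerN2.
Qed.

End TrajectoryBounds.

Theorem corollary2 (R : realType) (n : nat)
  (W : nat -> 'M[R]_n) (lam : nat -> 'rV[R]_n) (s x0 : 'cV[R]_n) :
  (forall t, row_stochastic (W t)) ->
  (forall t (i : 'I_n), 0 <= lam t 0 i <= 1) ->
  (forall t (i : 'I_n), lam t 0 i = 0 <-> (forall j : 'I_n, W t i j = 0)) ->
  (forall t, ~ (forall i : 'I_n, lam t 0 i = 0)) ->
  (forall i : 'I_n, 0 <= s i 0 <= 1) ->
  asymp_stable lam W ->
  (forall i : 'I_n, 0 <= x0 i 0 <= 1) ->
  forall xs : 'cV[R]_n, omega_limit (traj lam W s x0) xs ->
  forall i : 'I_n,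
    \big[Num.min/s i 0]_(j < n) s j 0 <= xs i 0 <= \big[Num.max/s i 0]_(j < n) s j 0.
Proof.
move=> W_stoch lam01 _ _ _ stable _ xs xs_lim i.
apply/andP; split.
  apply: (omega_limit_ge W_stoch lam01 _ stable xs_lim) => j.
  exact: bigmin_le.
apply: (omega_limit_le W_stoch lam01 _ stable xs_lim) => j.
exact: le_bigmax (fun k => s k 0) j.
Qed.
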